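(* Let $E$ be a finite set and $V \subset \mathbb R^E$ a linear subspace with oriented matroid $M$. Define an equivalence relation on the set of all triples $(F,G,T)$, where $T$ is a tope of $M$ and $F \subset G$ are flats relatively acyclic in $T$, by $(F,G,T) \sim (F',G',T')$ if and only if $(F,G) = (F',G')$ and $\pi_{G \setminus F}(T) = \pi_{G \setminus F}(T')$. Then for two such triples, ${}_T\mathcal Y_{FG}^\circ \cap {}_{T'}\mathcal Y_{F'G'}^\circ$ is empty unless $(F,G,T) \sim (F',G',T')$, in which case ${}_T\mathcal Y_{FG}^\circ = {}_{T'}\mathcal Y_{F'G'}^\circ$.
   Context: $\mathbb P^1_{\mathbb R}=\mathbb R\cup\{\infty\}$ with analytic topology. The sign map $s:\mathbb R^E\to\{-,0,+\}^E$ records signs of coordinates; the covectors of $M$ are $\{s(v):v\in V\}$; for a signed set $X$, $X^-,X^0,X^+$ are the coordinates with value $-,0,+$; $X\le Y$ means $X^+\subset Y^+$, $X^-\subset Y^-$; topes are maximal covectors; flats are the sets $X^0$. A flat is relatively acyclic in a tope $T$ if it equals $X^0$ for a covector $X\le T$. $\pi_A$ denotes restriction of a signed set (or vector) to the coordinates in $A$. ${}_T\mathcal Y_V$ is the closure of $s^{-1}(T)\cap V$ in $(\mathbb P^1_{\mathbb R})^E$, and ${}_T\mathcal Y_{FG}^\circ := {}_T\mathcal Y_V \cap (0^F\times\mathbb R_{>0}^{(G\setminus F)\cap T^+}\times\mathbb R_{<0}^{(G\setminus F)\cap T^-}\times\infty^{E\setminus G})$, i.e. points of ${}_T\mathcal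 Y_V$ with coordinates $0$ on $F$, positive on $(G\setminus F)\cap T^+$, negative on $(G\setminus F)\cap T^-$, and $\infty$ on $E\setminus G$. *)

From HB Require Import structures.
From mathcomp Require Import all_boot all_order all_algebra.
From mathcomp Require Import reals.
Set Implicit Arguments. Unset Strict Implicit. Unset Printing Implicit Defensive.
Import Order.TTheory GRing.Theory Num.Theory.
Local Open Scope ring_scope.

Inductive sign := SNeg | SZero | SPos.

Section OM.
Variables (R : realType) (E : finType).

Definition is_subspace (V : (E -> R) -> Prop) : Prop :=
  [/\ V (fun _ => 0),
      (forall v w, V v -> V w -> V (fun e => v e + w e)) &
      (forall (a : R) v, V v -> V (fun e => a * v e))].

Definition sgnR (x : R) : sign :=
  if x < 0 then SNeg else if x == 0 then SZero else SPos.
Definition sgn_vec (v : E -> R) : E -> sign := fun e => sgnR (v e).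

Definition covector (V : (E -> R) -> Prop) (X : E -> sign) : Prop :=
  exists v, V v /\ forall e, X e = sgn_vec v e.

Definition sle (X Y : E -> sign) : Prop :=
  forall e, (X e = SPos -> Y e = SPos) /\ (X e = SNeg -> Y e = SNeg).

Definition tope (V : (E -> R) -> Prop) (T : E -> sign) : Prop :=
  covector V T /\
  forall Y, covector V Y -> sle T Y -> forall e, Y e = T e.

Definition zero_set (X : E -> sign) (F : {set E}) : Prop :=
  forall e, e \in F <-> X e = SZero.

Definition flat (V : (E -> R) -> Prop) (F : {set E}) : Prop :=
  exists X, covector V X /\ zero_set X F.

Definition rel_acyclic (V : (E -> R) -> Prop) (T : E -> sign) (F : {set E}) : Prop :=
  exists X, covector V X /\ sle X T /\ zero_set X F.

Definition triple (V : (E -> R) -> Prop) (F G : {set E}) (T : E -> sign) : Prop :=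
  tope V T /\ flat V F /\ flat V G /\ rel_acyclic V T F /\
  rel_acyclic V T G /\ F \subset G.

Definition triple_equiv (F G : {set E}) (T : E -> sign)
    (F' G' : {set E}) (T' : E -> sign) : Prop :=
  [/\ F = F', G = G' & forall e, e \in G :\: F -> T e = T' e].

(* P^1_R = R ∪ {∞}, modelled as option R with None = ∞. *)
Definition P1 := option R.

(* basic neighbourhoods of the analytic topology on P^1_R, tested on a
   real number x: for a in R, {x : |x - a| < eps}; for ∞, {x : |x| > 1/eps}
   (together with ∞ itself, irrelevant for approximating by real points). *)
Definition near_P1 (p : P1) (x : R) (eps : R) : Prop :=
  match p with
  | Some a => `|x - a| < eps
  | None => eps^-1 < `|x|
  end.

(* closure in (P^1_R)^E (product topology) of a set S of real points *)
Definition in_closure (S : (E -> R) -> Prop) (p : E -> P1) : Prop :=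
  forall eps : R, 0 < eps -> exists v, S v /\ forall e, near_P1 (p e) (v e) eps.

Definition Y_V (V : (E -> R) -> Prop) (T : E -> sign) (p : E -> P1) : Prop :=
  in_closure (fun v => V v /\ forall e, sgn_vec v e = T e) p.

Definition Y_FG_open (V : (E -> R) -> Prop) (T : E -> sign) (F G : {set E})
    (p : E -> P1) : Prop :=
  Y_V V T p /\
  forall e,
    (e \in F -> p e = Some 0) /\
    (e \in G :\: F -> T e = SPos -> exists x, p e = Some x /\ 0 < x) /\
    (e \in G :\: F -> T e = SNeg -> exists x, p e = Some x /\ x < 0) /\
    (e \notin G -> p e = None).

End OM.

From HB Require Import structures.
From mathcomp Require Import all_boot all_order all_algebra.
From mathcomp Require Import reals.
From mathcomp Require Import ring lra.
From mathcomp Require boolp.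

(* A point p of the stratum _T Y_{FG}° remembers its triple: its coordinates are 0 on F,
   nonzero reals with the signs of T on G \ F, and ∞ outside G. Hence strata of
   inequivalent triples are disjoint. Conversely, if T' agrees with T on G \ F, the
   points of V of sign T' approximate p: start from some v in V of sign T close to p,
   subtract a vector of V that agrees with v on F and is small because v is small on F,
   then add a small multiple of a vector of sign T' (fixing the signs on F) and a large
   multiple of a vector of V with zero set G and the signs of T' elsewhere (pushing the
   coordinates outside G to ∞ with the right signs). *)

Set Implicit Arguments. Unset Strict Implicit. Unset Printing Implicit Defensive.
Import Order.TTheory GRing.Theory Num.Theory.
Local Open Scope ring_scope.

Section Signs.
Variable R : realType.

Variant sgnR_spec (x : R) : sign -> Prop :=
  | SgnRNeg of x < 0 : sgnR_spec x SNeg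
  | SgnRZero of x = 0 : sgnR_spec x SZero
  | SgnRPos of 0 < x : sgnR_spec x SPos.

Lemma sgnRP (x : R) : sgnR_spec x (sgnR x).
Proof.
rewrite /sgnR; case: ltrgtP => [x_lt0|x_gt0|->].
- exact: SgnRNeg.
- exact: SgnRPos.
- exact: SgnRZero.
Qed.

Lemma sgnR_gt0 (x : R) : 0 < x -> sgnR x = SPos.
Proof. by case: sgnRP => // [/lt_trans h/h|->]; rewrite ltxx. Qed.

Lemma sgnR_lt0 (x : R) : x < 0 -> sgnR x = SNeg.
Proof. by case: sgnRP => // [->|/lt_trans h/h]; rewrite ltxx. Qed.

Lemma sgnR0 : sgnR (0 : R) = SZero.
Proof. by case: sgnRP => //; rewrite ltxx. Qed.

Lemma sgnR_eq0 (x : R) : sgnR x = SZero <-> x = 0.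
Proof. by split=> [|->]; [case: sgnRP | exact: sgnR0]. Qed.

Lemma sgnR_pM (c x : R) : 0 < c -> sgnR (c * x) = sgnR x.
Proof.
move=> c_gt0; case: (sgnRP x) => [x_lt0|->|x_gt0].
- by rewrite sgnR_lt0 // pmulr_rlt0.
- by rewrite mulr0 sgnR0.
- by rewrite sgnR_gt0 // mulr_gt0.
Qed.

Lemma sgnR_near (a b : R) : `|a - b| < `|b| -> sgnR a = sgnR b.
Proof.
case: (sgnRP b) => [b_lt0|->|b_gt0]; last first.
- by rewrite ltr_norml gtr0_norm // => /andP[h _]; apply: sgnR_gt0; lra.
- by rewrite normr0 normr_lt0.
- by rewrite ltr_norml ltr0_norm // => /andP[_ h]; apply: sgnR_lt0; lra.
Qed.

End Signs.

Section FiniteBounds.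
Variables (R : realType) (E : finType).

Lemma ub_fin (f : E -> R) : exists2 M, 0 <= M & forall e, `|f e| <= M.
Proof.
exists (\sum_e `|f e|); first exact: sumr_ge0.
by move=> e; rewrite (bigD1 e) //= lerDl sumr_ge0.
Qed.

Lemma lb_fin_neq0 (f : E -> R) :
  exists2 m, 0 < m & forall e, f e != 0 -> m <= `|f e|.
Proof.
have [M M_ge0 hM] := ub_fin (fun e => (f e)^-1).
have M1_gt0 : 0 < M + 1 by lra.
exists (M + 1)^-1; first by rewrite invr_gt0.
move=> e fe_neq0; rewrite invf_ple ?posrE ?normr_gt0 //.
by rewrite -normfV; apply: le_trans (hM e) _; lra.
Qed.

Lemma small_multiple (t : E -> R) (mu : R) : 0 < mu ->
  exists2 d, 0 < d & forall e, `|d * t e| < mu.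
Proof.
move=> mu_gt0; have [M M_ge0 hM] := ub_fin t.
have M1_gt0 : 0 < M + 1 by lra.
set d := mu / (M + 1); have d_gt0 : 0 < d by exact: divr_gt0.
have dM : d * M + d = mu by rewrite /d; field; lra.
exists d => // e; rewrite normrM gtr0_norm //.
by have := ler_wpM2l (ltW d_gt0) (hM e); lra.
Qed.

Lemma large_multiple (s x : E -> R) (K : R) :
  exists2 l, 0 < l & forall e, x e != 0 ->
    sgnR (s e + l * x e) = sgnR (x e) /\ K < `|s e + l * x e|.
Proof.
have [M M_ge0 hM] := ub_fin s.
have [m m_gt0 hm] := lb_fin_neq0 x.
have L_gt0 : 0 < M + `|K| + 1 by have := normr_ge0 K; lra.
set l := (M + `|K| + 1) / m; have l_gt0 : 0 < l by exact: divr_gt0.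
have lm : l * m = M + `|K| + 1 by rewrite /l mulfVK ?gt_eqF.
exists l => // e xe_neq0.
have big_lx : M + `|K| + 1 <= `|l * x e|.
  by rewrite normrM gtr0_norm // -lm ler_pM2l // hm.
have se := hM e; have K_le := ler_norm K; have K_ge0 := normr_ge0 K.
split.
- by rewrite -(sgnR_pM (x e) l_gt0); apply: sgnR_near; rewrite addrK; lra.
- by have := ler_normB (s e + l * x e) (s e); rewrite addrAC subrr add0r; lra.
Qed.

End FiniteBounds.

Section Subspace.
Variables (R : realType) (E : finType) (V : (E -> R) -> Prop).
Hypothesis hV : is_subspace V.

Lemma subspace0 : V (fun _ => 0).
Proof. by case: hV. Qed.

Lemma subspaceD v w : V v -> V w -> V (fun e => v e + w e).
Proof. by case: hV => _ + _; apply. Qed.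

Lemma subspaceZ (a : R) v : V v -> V (fun e => a * v e).
Proof. by case: hV => _ _; apply. Qed.

Lemma subspaceB v w : V v -> V w -> V (fun e => v e - w e).
Proof.
move=> Vv Vw; have := subspaceD Vv (subspaceZ (-1) Vw).
by congr V; apply: boolp.funext => e; rewrite mulN1r.
Qed.

Lemma subspace_bounded_lift (s : seq E) : exists2 C, 0 <= C & forall v, V v ->
  forall eta, 0 <= eta -> (forall f, f \in s -> `|v f| <= eta) ->
  exists z, [/\ V z, forall f, f \in s -> z f = v f & forall e, `|z e| <= C * eta].
Proof.
elim: s => [|a s [C C_ge0 IH]].
  exists 0 => // v _ eta _ _; exists (fun _ => 0); split=> //; first exact: subspace0.
  by move=> e; rewrite normr0 mul0r.
have IHs v eta : V v -> 0 <= eta -> (forall f, f \in a :: s -> `|v f| <= eta) ->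
    exists z, [/\ V z, forall f, f \in s -> z f = v f & forall e, `|z e| <= C * eta].
  by move=> Vv eta_ge0 hv; apply: IH => // f fs; apply: hv; rewrite inE fs orbT.
(* Either the coordinate [a] is free over those in [s], and [z] is corrected along a
   vector of V vanishing on [s], or it is determined by them and [z a = v a] already. *)
case: (boolp.EM (exists w, [/\ V w, forall f, f \in s -> w f = 0 & w a = 1])).
  move=> [w [Vw ws wa]]; have [W W_ge0 hW] := ub_fin w.
  exists (C + (1 + C) * W); first by nra.
  move=> v Vv eta eta_ge0 hv; have [z [Vz zs hz]] := IHs v eta Vv eta_ge0 hv.
  exists (fun e => z e + (v a - z a) * w e); split.
  - exact/subspaceD/subspaceZ.
  - move=> f; rewrite inE => /orP[/eqP->|fs] /=; first by rewrite wa mulr1 subrKC.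
    by rewrite (ws f fs) (zs f fs) mulr0 addr0.
  move=> e; have va : `|v a| <= eta by apply: hv; rewrite mem_head.
  have shift : `|(v a - z a) * w e| <= (eta + C * eta) * W.
    rewrite normrM; apply: ler_pM => //.
    by apply: le_trans (ler_normB _ _) _; rewrite lerD // hz.
  have := ler_normD (z e) ((v a - z a) * w e); have := hz e; nra.
move=> no_w; exists C => // v Vv eta eta_ge0 hv.
have [z [Vz zs hz]] := IHs v eta Vv eta_ge0 hv.
exists z; split=> // f; rewrite inE => /orP[/eqP->|]; last exact: zs.
have [/eqP|da_neq0] := eqVneq (v a - z a) 0; first by rewrite subr_eq0 => /eqP.
case: no_w; exists (fun e => (v a - z a)^-1 * (v e - z e)); split.
- exact/subspaceZ/subspaceB.
- by move=> g gs; rewrite (zs g gs) subrr mulr0.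
- exact: mulVf.
Qed.

Lemma closure_approx_vanishing (S : (E -> R) -> Prop) (F : {set E}) p :
  (forall v, S v -> V v) -> in_closure S p -> (forall e, e \in F -> p e = Some 0) ->
  forall eps, 0 < eps -> exists w, [/\ V w, forall e, e \in F -> w e = 0 &
    forall e a, p e = Some a -> `|w e - a| < eps].
Proof.
move=> SV clp pF eps eps_gt0; have [C C_ge0 hC] := subspace_bounded_lift (enum F).
have C1_gt0 : 0 < C + 1 by lra.
set eta := eps / (C + 1); have eta_gt0 : 0 < eta by exact: divr_gt0.
have eps_eta : C * eta + eta = eps by rewrite /eta; field; lra.
have [v [Sv hv]] := clp eta eta_gt0.
have vF f : f \in enum F -> `|v f| <= eta.
  by rewrite mem_enum => /pF pf; have := hv f; rewrite pf /= subr0 => /ltW.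
have [z [Vz zF hz]] := hC v (SV v Sv) eta (ltW eta_gt0) vF.
exists (fun e => v e - z e); split; first exact: subspaceB (SV v Sv) Vz.
  by move=> e eF; rewrite zF ?mem_enum ?subrr.
move=> e a pe; have := hv e; rewrite pe /= => hva; have := hz e.
have := ler_normB (v e - a) (z e); rewrite addrAC; lra.
Qed.

End Subspace.

Section Strata.
Variables (R : realType) (E : finType) (V : (E -> R) -> Prop).
Hypothesis hV : is_subspace V.

Lemma rel_acyclic_neq0 (T : E -> sign) (F : {set E}) e :
  rel_acyclic V T F -> e \notin F -> T e <> SZero.
Proof.
move=> [X [_ [XT XF]]] eF; have : X e <> SZero by move/(XF e); apply/negP.
by case hX: (X e) => // _; [rewrite ((XT e).2 hX) | rewrite ((XT e).1 hX)].
Qed.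

Lemma rel_acyclic_vec (T : E -> sign) (G : {set E}) : rel_acyclic V T G ->
  exists x, V x /\ forall e, sgnR (x e) = if e \in G then SZero else T e.
Proof.
move=> [X [[x [Vx xX]] [XT XG]]]; exists x; split=> // e.
rewrite -[sgnR _]/(sgn_vec x e) -xX.
case: ifP => eG; first exact/(XG e).
have : X e <> SZero by move/(XG e); rewrite eG.
by case hX: (X e) => // _; [rewrite ((XT e).2 hX) | rewrite ((XT e).1 hX)].
Qed.

(* The sign pattern of the points of _T Y_{FG}°, with [None] for the coordinate ∞. *)
Definition stratum_sign (F G : {set E}) (T : E -> sign) (e : E) : option sign :=
  if e \in F then Some SZero else if e \in G then Some (T e) else None.

Lemma Y_FG_openE (T : E -> sign) (F G : {set E}) (p : E -> P1 R) :
  F \subset G -> rel_acyclic V T F ->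
  Y_FG_open V T F G p <->
  Y_V V T p /\ forall e, omap (@sgnR R) (p e) = stratum_sign F G T e.
Proof.
move=> sFG raF; split=> [[Yp hp]|[Yp hp]]; split=> // e.
  have [pF [pP [pN pG]]] := hp e; rewrite /stratum_sign.
  have [eF|eF] := boolP (e \in F); first by rewrite pF //= sgnR0.
  have [eG|eG] := boolP (e \in G); last by rewrite pG.
  have eGF : e \in G :\: F by rewrite inE eF eG.
  move: (rel_acyclic_neq0 raF eF) (pP eGF) (pN eGF); case: (T e) => // _.
  - by move=> _ /(_ erefl) [x [-> /sgnR_lt0 <-]].
  - by move=> /(_ erefl) [x [-> /sgnR_gt0 <-]] _.
move: (hp e); rewrite /stratum_sign !inE.
have [eF|eF] /= := boolP (e \in F).
  rewrite (subsetP sFG e eF) => pe; split=> [_|]; last by do !split.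
  by move: pe; case: (p e) => [a [/sgnR_eq0 ->]|].
case: (e \in G) => /= pe; last by do !split=> //; move: pe; case: (p e).
move: pe; case: (p e) => // a [<-].
by split=> //; split; [|split=> //]; move=> _; case: sgnRP => // ? _; exists a.
Qed.

Lemma stratum_sign_inj (F G F' G' : {set E}) (T T' : E -> sign) :
  F \subset G -> F' \subset G' ->
  (forall e, e \notin F -> T e <> SZero) -> (forall e, e \notin F' -> T' e <> SZero) ->
  stratum_sign F G T =1 stratum_sign F' G' T' -> triple_equiv F G T F' G' T'.
Proof.
move=> sFG sFG' nzT nzT' eqs; rewrite /stratum_sign in eqs.
have eqF : F = F'.
  apply/setP => e; move: (eqs e).
  have [eF|eF] := boolP (e \in F); have [eF'|eF'] := boolP (e \in F') => //.
  - by case: ifP => // _ [/esym/(nzT' _ eF')].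
  - by case: ifP => // _ [/(nzT _ eF)].
subst F'; have eqG : G = G'.
  apply/setP => e; move: (eqs e).
  have [eF _|_] := boolP (e \in F); first by rewrite !(subsetP _ _ eF).
  by case: (e \in G); case: (e \in G').
subst G'; split=> // e; rewrite inE => /andP[eF eG].
by move: (eqs e); rewrite (negbTE eF) eG => -[].
Qed.

Lemma stratum_sign_equiv (F G F' G' : {set E}) (T T' : E -> sign) :
  triple_equiv F G T F' G' T' -> stratum_sign F G T =1 stratum_sign F' G' T'.
Proof.
case=> <- <- eqT e; rewrite /stratum_sign.
by case: ifP => eF //; case: ifP => eG //; rewrite eqT // inE eF eG.
Qed.

Lemma Y_V_transfer (T0 T : E -> sign) (F G : {set E}) (p : E -> P1 R) :
  covector V T -> rel_acyclic V T F -> rel_acyclic V T G -> F \subset G ->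
  Y_V V T0 p -> (forall e, omap (@sgnR R) (p e) = stratum_sign F G T e) -> Y_V V T p.
Proof.
move=> [t [Vt tT]] raF /rel_acyclic_vec[x [Vx xT]] sFG Yp hp eps eps_gt0.
have pF e : e \in F -> p e = Some 0.
  by move=> eF; move: (hp e); rewrite /stratum_sign eF; case: (p e) => // a [/sgnR_eq0 ->].
have [m m_gt0 hm] := lb_fin_neq0 (fun e => odflt 0 (p e)).
set mu := Num.min eps m; have mu_gt0 : 0 < mu by rewrite lt_min eps_gt0.
have [mu_le_eps mu_le_m] : mu <= eps /\ mu <= m by rewrite !ge_min !lexx orbT.
have mu2_gt0 : 0 < mu / 2 by rewrite divr_gt0.
have [w [Vw wF hw]] := closure_approx_vanishing hV (fun _ => @proj1 _ _) Yp pF mu2_gt0.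
have [d d_gt0 hd] := small_multiple t mu2_gt0.
have [l l_gt0 hl] := large_multiple (fun e => w e + d * t e) x eps^-1.
exists (fun e => w e + d * t e + l * x e).
suff coord e : sgnR (w e + d * t e + l * x e) = T e /\
               near_P1 (p e) (w e + d * t e + l * x e) eps.
  split; first split; try by move=> e; case: (coord e).
  exact (subspaceD hV (subspaceD hV Vw (subspaceZ hV d Vt)) (subspaceZ hV l Vx)).
have dte := hd e; move: (hp e) (xT e); rewrite /stratum_sign.
have [eF|eF] := boolP (e \in F).
  rewrite (subsetP sFG e eF) => _ /sgnR_eq0 ->.
  by rewrite wF // pF //= mulr0 addr0 add0r subr0 sgnR_pM // tT; split=> //; lra.
case: ifP => eG /= pe xe.
- move: pe xe; case pea: (p e) => [a|//] [sa] /sgnR_eq0 ->; rewrite mulr0 addr0 /=.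
  have a_neq0 : a != 0.
    by apply/eqP => a0; apply: (rel_acyclic_neq0 raF eF); rewrite -sa a0 sgnR0.
  have a_ge : m <= `|a| by have := hm e; rewrite pea; apply.
  have near_a : `|w e + d * t e - a| < mu.
    by have := ler_normD (w e - a) (d * t e); rewrite addrAC; have := hw e a pea; lra.
  by split; [rewrite -sa; apply: sgnR_near | ]; lra.
- have x_neq0 : x e != 0.
    by apply/eqP => /sgnR_eq0; rewrite xe; apply: rel_acyclic_neq0 raF _.
  by have [-> big] := hl e x_neq0; split=> //; move: pe; case: (p e).
Qed.

End Strata.

Theorem lemma5p3 (R : realType) (E : finType) (V : (E -> R) -> Prop)
  (hV : is_subspace V)
  (F G : {set E}) (T : E -> sign) (F' G' : {set E}) (T' : E -> sign)
  (h1 : triple V F G T) (h2 : triple V F' G' T') :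
  (~ triple_equiv F G T F' G' T' ->
     forall p, ~ (Y_FG_open V T F G p /\ Y_FG_open V T' F' G' p)) /\
  (triple_equiv F G T F' G' T' ->
     forall p, Y_FG_open V T F G p <-> Y_FG_open V T' F' G' p).
Proof.
move: h1 h2 => [[cT _] [_ [_ [raF [raG sFG]]]]] [[cT' _] [_ [_ [raF' [raG' sFG']]]]].
split=> [not_equiv p [] | equiv p].
  move=> /(Y_FG_openE _ sFG raF) [_ hp] /(Y_FG_openE _ sFG' raF') [_ hp'].
  apply: not_equiv; apply: stratum_sign_inj sFG sFG' _ _ _ => [e|e|e].
  - exact: rel_acyclic_neq0 raF.
  - exact: rel_acyclic_neq0 raF'.
  - by rewrite -hp hp'.
have eqs := stratum_sign_equiv equiv; case: equiv raF' raG' sFG' eqs => <- <- _ raF' raG' _ eqs.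
rewrite (Y_FG_openE _ sFG raF) (Y_FG_openE _ sFG raF').
split=> -[Yp hp].
- have hp' e : omap (@sgnR R) (p e) = stratum_sign F G T' e by rewrite hp eqs.
  exact: (conj (Y_V_transfer hV cT' raF' raG' sFG Yp hp') hp').
- have hp' e : omap (@sgnR R) (p e) = stratum_sign F G T e by rewrite hp eqs.
  exact: (conj (Y_V_transfer hV cT raF raG sFG Yp hp') hp').
Qed.
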